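(* Let $f\in\mathbf{SB}_n$ be nonconstant. If $\deg(f)$ is not a power of $2$, then $\mathcal{AI}(f)<2^{\lfloor\log_2\deg(f)\rfloor}$. Consequently, every nonconstant $f\in\mathbf{SB}_n$ satisfies $\mathcal{AI}(f)\le 2^{\lfloor\log_2\deg(f)\rfloor}$.
   Context: $\mathbf{SB}_n$ is the set of symmetric Boolean functions on $n$ variables; $\deg$ is the algebraic degree. The algebraic immunity is $\mathcal{AI}(f)=\min\{\deg(g): g\neq0,\ gf=0 \text{ or } g(f+1)=0\}$. *)

From mathcomp Require Import all_boot all_fingroup.
Set Implicit Arguments. Unset Strict Implicit. Unset Printing Implicit Defensive.

(* Boolean functions on n variables: maps from F_2^n (modelled as 'I_n -> bool) to F_2. *)
Definition bvec (n : nat) := {ffun 'I_n -> bool}.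
Definition boolfun (n : nat) := {ffun bvec n -> bool}.

Definition supp n (x : bvec n) : {set 'I_n} := [set i | x i].

(* ANF coefficient of the monomial prod_{i in S} x_i (Moebius transform over F_2):
   a_S = XOR_{x : supp x \subset S} f x. *)
Definition anf_coef n (f : boolfun n) (S : {set 'I_n}) : bool :=
  \big[addb/false]_(x : bvec n | supp x \subset S) f x.

(* algebraic degree: max size of a monomial with nonzero ANF coefficient (0 for f = 0) *)
Definition deg n (f : boolfun n) : nat :=
  \max_(S : {set 'I_n} | anf_coef f S) #|S|.

Definition sym_boolfun n (f : boolfun n) : Prop :=
  forall (s : {perm 'I_n}) (x : bvec n), f [ffun i => x (s i)] = f x.

Definition bconst n (b : bool) : boolfun n := [ffun _ => b].

(* product g*f = 0 pointwise, and f+1 = complement *)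
Definition annihilates n (g f : boolfun n) : bool := [forall x, ~~ (g x && f x)].
Definition bcompl n (f : boolfun n) : boolfun n := [ffun x => ~~ f x].

(* algebraic immunity: min deg of nonzero g with g f = 0 or g (f+1) = 0.
   The set is always nonempty (f or f+1 is nonzero and annihilates the other),
   and every degree is <= n, so the default value n.+1 is never attained. *)
Definition AI n (f : boolfun n) : nat :=
  \big[minn/n.+1]_(g : boolfun n | (g != bconst n false) &&
                     (annihilates g f || annihilates g (bcompl f))) deg g.

Definition is_pow2 (d : nat) : Prop := exists k, d = 2 ^ k.

(* Let f be a nonconstant symmetric Boolean function of degree d, and let
   M = 2^k be the largest power of 2 with M <= d < 2M.  We show AI f <= M,
   with strict inequality unless d = M.

   A symmetric f depends only on the Hamming weight: f x = F |x| for a bit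
   sequence F (its weight profile).  The ANF coefficient of a monomial of
   size s is then the s-th iterated F_2-difference of F at 0, and the
   2^m-th difference is simply F j + F (j + 2^m) (Lucas).  As all
   coefficients of size > d vanish, F is 2M-periodic on [0, n].  Hence:
   - either some residue u < M has F (u + M) = F u (or u + M > n); then F is
     constant on the weights congruent to u mod M, and the indicator of
     that weight class, of degree < M, annihilates f or f + 1: AI f < M;
   - or F (w + M) = ~~ F w throughout, so the M-th difference of F is
     constantly 1, deg f <= M, i.e. d = M, and AI f <= deg f = M. *)

From mathcomp Require Import all_boot all_fingroup zify.
Set Implicit Arguments. Unset Strict Implicit. Unset Printing Implicit Defensive.

Definition wvec n w : bvec n := [ffun i : 'I_n => i < w].

Lemma card_le_n n (A : {set 'I_n}) : #|A| <= n.
Proof. by rewrite -[n in _ <= n]card_ord max_card. Qed.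

Lemma card_set_count n (P : pred 'I_n) : #|[set i | P i]| = count P (enum 'I_n).
Proof. by rewrite cardsE cardE {1}/enum_mem size_filter enumT. Qed.

Lemma count_supp n (x : bvec n) : count id [seq x i | i <- enum 'I_n] = #|supp x|.
Proof. by rewrite count_map card_set_count. Qed.

Lemma card_supp_wvec n w : w <= n -> #|supp (wvec n w)| = w.
Proof.
move=> wn; rewrite card_set_count (eq_count (a2 := fun i : 'I_n => i < w)); last first.
  by move=> i; rewrite ffunE.
rewrite -(count_map val (fun i => i < w)) val_enum_ord -size_filter.
by have := filter_iota_ltn 0 wn; rewrite add0n => ->; rewrite size_iota.
Qed.

Lemma count_bool (a : pred bool) s :
  count a s = a true * count id s + a false * count negb s.
Proof.
elim: s => [|b s IH]; first by rewrite !muln0.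
rewrite /= IH; case: b; case: (a true); case: (a false);
  by rewrite /= ?mul1n ?mul0n ?add0n ?addn0 ?addnS ?addSn.
Qed.

Lemma perm_eq_bool (s t : seq bool) :
  size s = size t -> count id s = count id t -> perm_eq s t.
Proof.
move=> st_size st_count; apply/seq.permP => a; rewrite (count_bool a s) (count_bool a t).
have count_negb u : count negb u = size u - count id u.
  by rewrite -(count_predC id u) addKn.
by rewrite !count_negb st_size st_count.
Qed.

Lemma sym_weight n (f : boolfun n) x :
  sym_boolfun f -> f x = f (wvec n #|supp x|).
Proof.
move=> f_sym; set w := #|supp x|.
have /tuple_permP[p wx] : perm_eq [tuple wvec n w i | i < n] [tuple x i | i < n].
  apply: perm_eq_bool; first by rewrite !size_tuple.
  by rewrite /= !count_supp card_supp_wvec ?card_le_n.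
rewrite -(f_sym p x); congr (fun_of_fin f _); apply/ffunP => i.
have := congr1 (fun u => tnth u i) (val_inj wx).
by rewrite !tnth_mktuple => ->; rewrite ffunE.
Qed.

Definition D (H : nat -> bool) : nat -> bool := fun j => H j (+) H j.+1.

(* Lucas' theorem: binomial(2^m, i) is odd only for i = 0 and i = 2^m. *)
Lemma iter_D_pow2 m H j : iter (2 ^ m) D H j = H j (+) H (j + 2 ^ m).
Proof.
elim: m H j => [|m IH] H j; first by rewrite addn1.
by rewrite expnS mul2n -addnn iterD !IH addnA addbA addbK.
Qed.

Lemma iter_D_zero G N : (forall i, i <= N -> G i = false) ->
  forall t j, t + j <= N -> iter t D G j = false.
Proof.
move=> G0; elim=> [|t IH] j tjN; first exact: G0.
by rewrite /= /D !IH // -?addSnnS // (leq_trans _ tjN) // leq_add2r.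
Qed.

Lemma newton G N : (forall t, t <= N -> iter t D G 0 = false) ->
  forall j, j <= N -> G j = false.
Proof.
move=> G0.
suff iterG0 j t : t + j <= N -> iter t D G j = false by move=> j /(iterG0 j 0).
elim: j t => [|j IH] t tjN; first by apply: G0; rewrite -(addn0 t).
have -> : iter t D G j.+1 = iter t.+1 D G j (+) iter t D G j.
  by rewrite /= /D; case: (iter t D G j); case: (iter t D G j.+1).
by rewrite !IH // ?addSnnS // (leq_trans _ tjN) // leq_add2l.
Qed.

Definition flip n (a : 'I_n) (x : bvec n) : bvec n :=
  [ffun i => if i == a then ~~ x i else x i].

Lemma flipK n (a : 'I_n) : involutive (flip a).
Proof. by move=> x; apply/ffunP => i; rewrite !ffunE; case: eqP => // _; rewrite negbK. Qed.

Lemma flip_subset n (a : 'I_n) (S : {set 'I_n}) (x : bvec n) : a \in S ->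
  (supp (flip a x) \subset S) = (supp x \subset S).
Proof.
move=> aS.
suff flip_sub y : supp y \subset S -> supp (flip a y) \subset S.
  by apply/idP/idP => /flip_sub //; rewrite flipK.
move=> /subsetP yS; apply/subsetP => i; rewrite inE ffunE.
by case: eqP => [->//|_ yi]; apply: yS; rewrite inE.
Qed.

Lemma supp_flip n (a : 'I_n) (x : bvec n) : ~~ x a -> supp (flip a x) = a |: supp x.
Proof.
move=> xa; apply/setP => i; rewrite !inE ffunE.
by case: (eqVneq i a) => [->|]; rewrite ?xa.
Qed.

Lemma sum_weight_subsets n (H : nat -> bool) (S : {set 'I_n}) :
  \big[addb/false]_(x : bvec n | supp x \subset S) H #|supp x| = iter #|S| D H 0.
Proof.
move Es: #|S| => s; elim: s S H Es => [|s IH] S H.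
  move/eqP; rewrite cards_eq0 => /eqP ->.
  have supp0 : supp [ffun _ : 'I_n => false] = set0.
    by apply/setP => i; rewrite !inE ffunE.
  rewrite (big_pred1 [ffun _ => false]) ?supp0 ?cards0 // => x /=.
  rewrite subset0; apply/eqP/eqP => [x0|->//]; apply/ffunP => i.
  rewrite ffunE; apply/negbTE; apply: contra_eqN x0 => xi.
  by apply/set0Pn; exists i; rewrite inE.
move=> Es; have /set0Pn[a aS] : S != set0 by rewrite -card_gt0 Es.
have Es' : #|S :\ a| = s by move: Es; rewrite (cardsD1 a S) aS add1n => -[].
rewrite iterSr -(IH (S :\ a) (D H) Es') (bigID (fun x : bvec n => x a)) /=.
rewrite (reindex_inj (inv_inj (flipK a))) /=.
have subD1 (x : bvec n) : (supp x \subset S :\ a) = (supp x \subset S) && ~~ x a.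
  by rewrite subsetD1 inE.
rewrite [X in _ (+) X](eq_bigl (fun x : bvec n => supp x \subset S :\ a)); last first.
  by move=> x; rewrite subD1.
rewrite [X in X (+) _](eq_bigl (fun x : bvec n => supp x \subset S :\ a)); last first.
  by move=> x; rewrite subD1 flip_subset // ffunE eqxx.
rewrite -big_split /=; apply: eq_bigr => x; rewrite subD1 => /andP[_ xa].
by rewrite supp_flip // cardsU1 inE xa add1n /D addbC.
Qed.

Lemma anf_coef_weight n (h : boolfun n) H : (forall x, h x = H #|supp x|) ->
  forall S : {set 'I_n}, anf_coef h S = iter #|S| D H 0.
Proof. by move=> hH S; rewrite /anf_coef -sum_weight_subsets; apply: eq_bigr. Qed.

Lemma deg_le n (h : boolfun n) m :
  (forall S : {set 'I_n}, m < #|S| -> anf_coef h S = false) -> deg h <= m.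
Proof.
by move=> h0; apply/bigmax_leqP => S hS; rewrite leqNgt; apply: contraTN hS => /h0 ->.
Qed.

Lemma deg_ge n (h : boolfun n) (S : {set 'I_n}) : anf_coef h S -> #|S| <= deg h.
Proof. exact: leq_bigmax_cond. Qed.

Lemma deg_weight_lt n (h : boolfun n) H m : 0 < m ->
  (forall x, h x = H #|supp x|) ->
  (forall j, j + m <= n -> iter m D H j = false) -> deg h < m.
Proof.
move=> m_gt0 hH Hm; rewrite -(prednK m_gt0) ltnS; apply: deg_le => S.
rewrite (prednK m_gt0) (anf_coef_weight hH) => mS.
have Sn := card_le_n S.
rewrite -(subnK mS) iterD; apply: (iter_D_zero (N := n - m)).
  by move=> i i_le; apply: Hm; rewrite addnC -leq_subRL // (leq_trans mS).
by rewrite addn0 leq_sub2r.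
Qed.

Lemma weight_coef_deg n (f : boolfun n) F s : (forall x, f x = F #|supp x|) ->
  deg f < s <= n -> iter s D F 0 = false.
Proof.
move=> fF /andP[ds sn]; apply: negbTE; apply: contraTN ds => Fs.
by rewrite -leqNgt -{1}(card_supp_wvec sn) deg_ge // (anf_coef_weight fF) card_supp_wvec.
Qed.

Lemma bigmin_leq (I : eqType) (r : seq I) (P : pred I) (F : I -> nat) m j :
  j \in r -> P j -> \big[minn/m]_(i <- r | P i) F i <= F j.
Proof.
elim: r => //= i r IH; rewrite inE big_cons => /orP[/eqP <- -> | jr Pj].
  exact: geq_minl.
by case: (P i); [apply: leq_trans (geq_minr _ _) (IH jr Pj) | apply: IH].
Qed.

Lemma AI_le n (f g : boolfun n) : g != bconst n false ->
  annihilates g f || annihilates g (bcompl f) -> AI f <= deg g.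
Proof. by move=> g0 g_ann; apply: bigmin_leq; rewrite ?mem_index_enum ?g0. Qed.

Lemma anf_coef_compl n (f : boolfun n) (S : {set 'I_n}) : 0 < #|S| ->
  anf_coef (bcompl f) S = anf_coef f S.
Proof.
move=> S_gt0; rewrite /anf_coef (eq_bigr (fun x => f x (+) true)); last first.
  by move=> x _; rewrite ffunE addbT.
rewrite big_split /= (sum_weight_subsets (fun _ => true)) -(prednK S_gt0) iterSr.
by rewrite (iter_D_zero (N := #|S|.-1)) ?addbF ?addn0.
Qed.

(* f + 1 annihilates f, hence AI f <= deg f unless f = 1. *)
Lemma AI_le_deg n (f : boolfun n) : f <> bconst n true -> AI f <= deg f.
Proof.
move=> f1; apply: leq_trans (AI_le (g := bcompl f) _ _) _.
- apply: contra_not_neq f1 => /ffunP f0; apply/ffunP => x.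
  by move: (f0 x); rewrite !ffunE; case: (f x).
- by apply/orP; left; apply/forallP => x; rewrite ffunE andNb.
apply: deg_le => S dS; rewrite anf_coef_compl ?(leq_ltn_trans _ dS) //.
by apply: negbTE; apply: contraTN dS => /deg_ge; rewrite -leqNgt.
Qed.

Lemma profile_periodic n m (F : nat -> bool) :
  (forall s, 2 ^ m <= s <= n -> iter s D F 0 = false) ->
  forall j, j + 2 ^ m <= n -> F (j + 2 ^ m) = F j.
Proof.
move=> F0 j jn.
have : iter (2 ^ m) D F j = false.
  apply: (newton (N := n - 2 ^ m)) => [t tn|]; last by lia.
  by rewrite -iterD F0 //; apply/andP; split; lia.
by rewrite iter_D_pow2; case: (F j); case: (F (j + 2 ^ m)).
Qed.

Lemma weight_deg0 n (f : boolfun n) F : (forall x, f x = F #|supp x|) ->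
  deg f = 0 -> f = bconst n (F 0).
Proof.
move=> fF d0.
have Fstep j : j + 1 <= n -> F (j + 1) = F j.
  apply: (profile_periodic (m := 0)) => s /andP[s_gt0 sn].
  by apply: weight_coef_deg fF _; rewrite d0 s_gt0.
have Fconst w : w <= n -> F w = F 0.
  by elim: w => // w IH wn; rewrite -addn1 Fstep ?addn1 // IH // ltnW.
by apply/ffunP => x; rewrite fF Fconst ?card_le_n // ffunE.
Qed.

Lemma residue_const n M (F : nat -> bool) u :
  (forall j, j + (M + M) <= n -> F (j + (M + M)) = F j) ->
  (u + M <= n -> F (u + M) = F u) ->
  forall w, w <= n -> w %% M = u -> F w = F u.
Proof.
move=> Fper Fu w wn wu; rewrite (divn_eq w M) wu in wn *.
move: (w %/ M) wn; elim/ltn_ind => -[|[|q]] IH qn.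
- by rewrite mul0n add0n.
- by rewrite mul1n addnC Fu //; lia.
have -> : q.+2 * M + u = (q * M + u) + (M + M) by rewrite !mulSn; lia.
by rewrite Fper ?IH //; rewrite !mulSn in qn *; lia.
Qed.

Lemma alternating n M (F : nat -> bool) : 0 < M ->
  (forall j, j + (M + M) <= n -> F (j + (M + M)) = F j) ->
  (forall u, u < M -> u + M <= n -> F (u + M) = ~~ F u) ->
  forall w, w + M <= n -> F (w + M) = ~~ F w.
Proof.
move=> M_gt0 Fper Fbase; elim/ltn_ind => w IH wn.
case: (ltnP w M) => [wM | Mw]; first exact: Fbase.
have wE : w = (w - M) + M by rewrite subnK.
by rewrite wE -addnA Fper ?IH ?negbK //; lia.
Qed.

Lemma AI_lt_residue n (f : boolfun n) F k u :
  (forall x, f x = F #|supp x|) -> u < 2 ^ k -> u <= n ->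
  (forall w, w <= n -> w %% 2 ^ k = u -> F w = F u) -> AI f < 2 ^ k.
Proof.
move=> fF uM un Fu.
pose H w := w %% 2 ^ k == u; pose g : boolfun n := [ffun x => H #|supp x|].
have gH x : g x = H #|supp x| by rewrite ffunE.
have M_gt0 : 0 < 2 ^ k by rewrite expn_gt0.
apply: leq_ltn_trans (AI_le (g := g) _ _) (deg_weight_lt M_gt0 gH _).
- apply/eqP => /ffunP /(_ (wvec n u)).
  by rewrite !ffunE card_supp_wvec // /H modn_small // eqxx.
- apply/orP; case Fu_b: (F u); [right|left]; apply/forallP => x; rewrite !ffunE fF /H;
    by case: eqP => //= /(Fu _ (card_le_n (supp x))) ->; rewrite Fu_b.
- by move=> j _; rewrite iter_D_pow2 /H modnDr addbb.
Qed.

(* If F (w + 2^k) = ~~ F w, the 2^k-th difference is constantly 1, so deg f <= 2^k. *)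
Lemma deg_alternating n (f : boolfun n) F k :
  (forall x, f x = F #|supp x|) ->
  (forall w, w + 2 ^ k <= n -> F (w + 2 ^ k) = ~~ F w) -> deg f <= 2 ^ k.
Proof.
move=> fF Falt; rewrite -ltnS; apply: deg_weight_lt fF _ => // j jn.
by rewrite /= /D !iter_D_pow2 !Falt ?addbN ?addbb //; lia.
Qed.

Theorem proposition1 (n : nat) (f : boolfun n) :
  sym_boolfun f ->
  f <> bconst n false -> f <> bconst n true ->
  (~ is_pow2 (deg f) -> AI f < 2 ^ trunc_log 2 (deg f)) /\
  AI f <= 2 ^ trunc_log 2 (deg f).
Proof.
move=> f_sym f0 f1.
pose F w := f (wvec n w).
have fF x : f x = F #|supp x| := sym_weight x f_sym.
set d := deg f; set k := trunc_log 2 d; set M := 2 ^ k.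
have d_gt0 : 0 < d.
  by rewrite lt0n; apply/eqP => /(weight_deg0 fF); case: (F 0).
have dn : d <= n by apply: deg_le => S; rewrite ltnNge card_le_n.
have /andP[Md dM2] : M <= d < 2 ^ k.+1 by rewrite trunc_logP ?trunc_log_ltn.
(* All coefficients above d vanish, so the profile has period 2M = 2^(k+1). *)
have Fper : forall j, j + (M + M) <= n -> F (j + (M + M)) = F j.
  rewrite addnn -mul2n -expnS; apply: profile_periodic => s /andP[Ms sn].
  by apply: weight_coef_deg fF _; rewrite sn (leq_trans dM2).
have M_gt0 : 0 < M by rewrite expn_gt0.
(* Either some residue class mod M has the same value at u and u + M ... *)
case: (boolP [exists u : 'I_M, (u + M <= n) ==> (F (u + M) == F u)]).
  case/existsP => u /implyP Fu.
  have AI_lt : AI f < M.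
    have uM := ltn_ord u.
    apply: (AI_lt_residue fF uM); first by lia.
    by apply: residue_const Fper _ => /Fu /eqP.
  by split=> [_ //|]; apply: ltnW.
(* ... or F alternates with step M, which forces d = M. *)
rewrite negb_exists => /forallP Fbase.
have Falt : forall w, w + M <= n -> F (w + M) = ~~ F w.
  apply: alternating M_gt0 Fper _ => u uM uMn.
  by move: (Fbase (Ordinal uM)); rewrite /= uMn /=; case: (F u); case: (F (u + M)).
have dM : d <= M := deg_alternating fF Falt.
split; last exact: leq_trans (AI_le_deg f1) dM.
by move=> not_pow2; exfalso; apply: not_pow2; exists k; apply/eqP; rewrite eqn_leq dM.
Qed.
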